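(* Let $k\ge 1$ and let $\mathcal{H}_k=(V_k,\mathcal{E}_k)$ be a $k$-uniform hypergraph that has no proper $2$-coloring. Let $D_k$ be the directed graph with vertex set $V_k\cup U_k\cup\{s\}$, where $U_k=\{u_E: E\in\mathcal{E}_k\}$ is a set of new vertices, one for each hyperedge, and $s$ is a new vertex, and whose arcs are $sv$ for every $v\in V_k$ and $vu_E$ for every $v\in V_k$ and $E\in\mathcal{E}_k$ with $v\in E$. Then $D_k$ is acyclic, every $u\in U_k$ satisfies $\lambda_{D_k}(s,u)=k$, and $D_k$ contains no two arc-disjoint $(s,U_k)$-arborescences.
   Context: A hypergraph $(V,\mathcal{E})$ is $k$-uniform if every hyperedge has exactly $k$ vertices; a $2$-coloring of $V$ is proper if no hyperedge is monochromatic. $\lambda_D(s,v)$ is the maximum number of arc-disjoint directed $(s,v)$-paths in $D$. An $s$-arborescence is an acyclic subgraph $F=(V'\cup\{s\},A')$ in which every vertex of $V'$ has in-degree exactly $1$; it is an $(s,U)$-arborescence if it contains all vertices of $U$. *)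

From mathcomp Require Import all_boot.
Set Implicit Arguments. Unset Strict Implicit. Unset Printing Implicit Defensive.

Definition uniform (V : finType) (E : {set {set V}}) (k : nat) : Prop :=
  forall e, e \in E -> #|e| = k.

Definition monochromatic (V : finType) (c : V -> bool) (e : {set V}) : Prop :=
  forall x y, x \in e -> y \in e -> c x = c y.

Definition proper_2coloring (V : finType) (E : {set {set V}}) (c : V -> bool) : Prop :=
  forall e, e \in E -> ~ monochromatic c e.

Definition acyclic_rel (T : finType) (arc : rel T) : Prop :=
  forall (x : T) (p : seq T), path arc x p -> last x p = x -> p = [::].

Section Digraph.
Variables (T : finType) (arc : rel T).


Definition walk_arcs (x : T) (p : seq T) : seq (T * T) := zip (x :: p) p.

Definition dipath (s v : T) (p : seq T) : Prop :=
  [/\ path arc s p, last s p = v & uniq (s :: p)].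

Definition arc_disjoint_paths (s v : T) (ps : seq (seq T)) : Prop :=
  (forall p, p \in ps -> dipath s v p) /\
  (forall i j, i < j -> j < size ps ->
     forall a, a \in walk_arcs s (nth [::] ps i) -> a \notin walk_arcs s (nth [::] ps j)).

Definition lambda_eq (s v : T) (n : nat) : Prop :=
  (exists ps, arc_disjoint_paths s v ps /\ size ps = n) /\
  (forall ps, arc_disjoint_paths s v ps -> size ps <= n).

Definition s_arborescence (s : T) (V' : {set T}) (A' : {set T * T}) : Prop :=
  [/\ s \notin V',
      (forall a, a \in A' -> arc a.1 a.2),
      (forall a, a \in A' -> (a.1 \in s |: V') && (a.2 \in s |: V')),
      acyclic_rel (fun x y => (x, y) \in A')
    & forall v, v \in V' -> #|[set a in A' | a.2 == v]| = 1].

Definition sU_arborescence (s : T) (U : {set T}) (V' : {set T}) (A' : {set T * T}) : Prop :=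
  s_arborescence s V' A' /\ U \subset s |: V'.

End Digraph.

(* Vertices: None = s ; Some (inl v) = v in V ; Some (inr e) = u_e for e in E. *)
Definition Dvert (V : finType) (E : {set {set V}}) : finType :=
  option (V + {e : {set V} | e \in E})%type.

Definition Dk_arc (V : finType) (E : {set {set V}}) : rel (Dvert E) :=
  fun x y =>
    match x, y with
    | None, Some (inl _) => true
    | Some (inl v), Some (inr e) => v \in val e
    | _, _ => false
    end.

Definition Dk_s (V : finType) (E : {set {set V}}) : Dvert E := None.

Definition Dk_U (V : finType) (E : {set {set V}}) : {set Dvert E} :=
  [set x : Dvert E | if x is Some (inr _) then true else false].

(* Every arc of [D_k] climbs one level s < V < U, so [D_k] is acyclic, and every
   (s,u_E)-path is s -> v -> u_E with v in E.  Hence arc-disjoint (s,u_E)-paths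
   have distinct middle vertices, and the k vertices of E give k of them.
   An (s,U)-arborescence reaches each u_E through some v in E, which in turn can
   only be entered by the arc sv.  Colouring v by whether sv lies in the first of
   two arc-disjoint (s,U)-arborescences therefore makes no hyperedge
   monochromatic: the first one uses some sv with v in E, the second one some sw
   with w in E, and sw is not in the first. *)
From mathcomp Require Import all_boot.
Set Implicit Arguments. Unset Strict Implicit. Unset Printing Implicit Defensive.

Section Digraph.
Variables (T : finType) (arc : rel T).

Lemma head_walk_arcs (s : T) (p : seq T) :
  p != [::] -> (s, head s p) \in walk_arcs s p.
Proof. by case: p => // x p _; rewrite inE eqxx. Qed.

Lemma arc_disjoint_paths_uniq_head (s v : T) (ps : seq (seq T)) :
  s != v -> arc_disjoint_paths arc s v ps -> uniq [seq head s p | p <- ps].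
Proof.
move=> neq_sv [dip disj].
have nonempty p : p \in ps -> p != [::].
  by case/dip=> _ lastp _; apply: contra_neqN neq_sv => /eqP p0; rewrite -lastp p0.
have heads_neq i j : i < j -> j < size ps ->
    head s (nth [::] ps i) != head s (nth [::] ps j).
  move=> lt_ij lt_j; apply/eqP => same_head.
  have in_i := head_walk_arcs s (nonempty _ (mem_nth [::] (ltn_trans lt_ij lt_j))).
  have := disj i j lt_ij lt_j _ in_i.
  by rewrite same_head head_walk_arcs ?nonempty ?mem_nth.
apply/(uniqP s) => i j; rewrite !inE size_map => lt_i lt_j.
rewrite !(nth_map [::]) //.
case: (ltngtP i j) => // [lt_ij | lt_ji] /eqP.
- by rewrite (negPf (heads_neq _ _ lt_ij lt_j)).
- by rewrite eq_sym (negPf (heads_neq _ _ lt_ji lt_i)).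
Qed.

Lemma s_arborescence_in_arc (s : T) (Vs : {set T}) (A : {set T * T}) x :
  s_arborescence arc s Vs A -> x \in Vs ->
  exists y, [/\ (y, x) \in A, arc y x & y \in s |: Vs].
Proof.
case=> _ arcs ends _ indeg xVs; have /eqP/cards1P[[y x'] inA] := indeg _ xVs.
have : (y, x') \in [set a in A | a.2 == x] by rewrite inA inE.
rewrite inE /= => /andP[yx' /eqP x'x]; rewrite -x'x.
by exists y; split=> //; [apply: (arcs _ yx') | case/andP: (ends _ yx')].
Qed.

End Digraph.

Section Dk.
Variables (V : finType) (E : {set {set V}}).

Local Notation arc := (@Dk_arc V E).
Local Notation s := (Dk_s E).
Local Notation vert v := (Some (inl v) : Dvert E).
Local Notation hvert e := (Some (inr e) : Dvert E).

Definition Dk_level (x : Dvert E) : nat :=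
  match x with None => 0 | Some (inl _) => 1 | Some (inr _) => 2 end.

Lemma Dk_arc_level x y : arc x y -> Dk_level x < Dk_level y.
Proof. by case: x => [[a|a]|]; case: y => [[b|b]|]. Qed.

Lemma Dk_path_level x p : path arc x p -> p != [::] -> Dk_level x < Dk_level (last x p).
Proof.
elim: p x => [//|y p IHp] x /= /andP[xy yp] _.
case: p IHp yp => [|z p] IHp yp; first exact: Dk_arc_level.
exact: ltn_trans (Dk_arc_level xy) (IHp _ yp _).
Qed.

Lemma Dk_acyclic : acyclic_rel arc.
Proof.
move=> x p xp lastp; apply/eqP; apply: contraT => p0.
by have := Dk_path_level xp p0; rewrite lastp ltnn.
Qed.

Lemma Dk_dipath_hyperedge (e : {e : {set V} | e \in E}) p :
  dipath arc s (hvert e) p -> exists2 v, v \in val e & p = [:: vert v; hvert e].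
Proof.
case=> + + _; case: p => [//|[[v|//]|//] [//|[[//|f]|//] [|[[|]|] p]]] /=;
  rewrite ?andbF ?andbT // => vf [<-].
by exists v.
Qed.

Definition Dk_hyperedge_paths (e : {e : {set V} | e \in E}) : seq (seq (Dvert E)) :=
  [seq [:: vert v; hvert e] | v <- enum (val e)].

Lemma Dk_hyperedge_paths_disjoint e :
  arc_disjoint_paths arc s (hvert e) (Dk_hyperedge_paths e).
Proof.
split=> [p /mapP[v] | i j lt_ij].
  by rewrite mem_enum => ve ->; split; rewrite //= ve.
rewrite size_map => lt_j; have lt_i := ltn_trans lt_ij lt_j.
have [x0 _] : exists x0 : V, x0 \in val e.
  by apply/card_gt0P; rewrite cardE (leq_trans _ lt_j).
have neq_ij : vert (nth x0 (enum (val e)) i) != vert (nth x0 (enum (val e)) j).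
  by apply/eqP => -[/eqP]; rewrite nth_uniq ?enum_uniq // ltn_eqF.
rewrite !(nth_map x0) // => a; rewrite !inE.
by case/orP=> /eqP->; rewrite !xpair_eqE /= (negPf neq_ij).
Qed.

Lemma Dk_lambda_hyperedge e : lambda_eq arc s (hvert e) #|val e|.
Proof.
split.
  exists (Dk_hyperedge_paths e).
  by rewrite size_map -cardE; split; first exact: Dk_hyperedge_paths_disjoint.
move=> ps dps; have uniq_heads : uniq [seq head s p | p <- ps].
  exact: arc_disjoint_paths_uniq_head dps.
rewrite -(size_map (head s)) cardE -(size_map (fun v => vert v)).
apply: uniq_leq_size uniq_heads _ => _ /mapP[p /(dps.1) /Dk_dipath_hyperedge[v ve ->] ->].
by apply: map_f; rewrite mem_enum.
Qed.

Lemma Dk_arborescence_source_arc (Vs : {set Dvert E}) (A : {set Dvert E * Dvert E}) e :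
  sU_arborescence arc s (Dk_U E) Vs A -> e \in E ->
  exists2 v, v \in e & (s, vert v) \in A.
Proof.
case=> arbo UVs eE.
have uVs : hvert (exist _ e eE) \in Vs.
  by have := subsetP UVs (hvert (exist _ e eE)); rewrite !inE /= => ->.
have [y [_ yu yVs]] := s_arborescence_in_arc arbo uVs.
case: y yu yVs => [[v|//]|//] /= ve; rewrite !inE /= => vVs; exists v => //.
have [y [yv yv_arc _]] := s_arborescence_in_arc arbo vVs.
by case: y yv yv_arc => [[|]|].
Qed.

Lemma Dk_disjoint_arborescences_coloring V1 V2 A1 A2 :
  sU_arborescence arc s (Dk_U E) V1 A1 -> sU_arborescence arc s (Dk_U E) V2 A2 ->
  [disjoint A1 & A2] -> proper_2coloring E (fun v => (s, vert v) \in A1).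
Proof.
move=> arbo1 arbo2 disj e eE mono.
have [v1 v1e sv1] := Dk_arborescence_source_arc arbo1 eE.
have [v2 v2e sv2] := Dk_arborescence_source_arc arbo2 eE.
by have := mono _ _ v1e v2e; rewrite sv1 (disjointFl disj sv2).
Qed.

End Dk.

Theorem theorem10 (k : nat) (V : finType) (E : {set {set V}}) :
  0 < k ->
  uniform E k ->
  (forall c : V -> bool, ~ proper_2coloring E c) ->
  [/\ acyclic_rel (@Dk_arc V E),
      (forall u, u \in Dk_U E -> lambda_eq (@Dk_arc V E) (Dk_s E) u k)
    & ~ (exists (V1 V2 : {set Dvert E}) (A1 A2 : {set Dvert E * Dvert E}),
           [/\ sU_arborescence (@Dk_arc V E) (Dk_s E) (Dk_U E) V1 A1,
               sU_arborescence (@Dk_arc V E) (Dk_s E) (Dk_U E) V2 A2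
             & [disjoint A1 & A2]])].
Proof.
move=> _ unifE no_coloring; split.
- exact: Dk_acyclic.
- move=> [[v|e]|]; rewrite inE //= => _; rewrite -(unifE _ (valP e)).
  exact: Dk_lambda_hyperedge.
- case=> V1 [V2 [A1 [A2 [arbo1 arbo2 disj]]]].
  exact: no_coloring (Dk_disjoint_arborescences_coloring arbo1 arbo2 disj).
Qed.
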